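(* For every integer $n\ge0$ and every sequence $s\neq(0)$ of non-negative integers with finitely many nonzero terms, setting $\alpha=[s]$, $$B^n_s=\sum_{J=(j_1,\dots,j_\alpha)\in\mathcal A^0_s}\ \sum_{1\le l_1<l_2<\dots<l_{\alpha-1}<l_\alpha:=n}\ \{l_1\}\prod_{a=2}^{\alpha}\{s^J_{a-1},l_a,j_a\},$$ i.e. in nested form $B^n_s=\sum_{J\in\mathcal A^0_s}\{s^J_{\alpha-1},n,j_\alpha\}\sum_{l_{\alpha-1}=\alpha-1}^{n-1}\{s^J_{\alpha-2},l_{\alpha-1},j_{\alpha-1}\}\cdots\sum_{l_2=2}^{l_3-1}\{s^J_1,l_2,j_2\}\sum_{l_1=1}^{l_2-1}\{l_1\}$ (for $\alpha=1$ the summand is just $\{s^J_0,n,j_1\}$).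
   Context: Fix real numbers $\tilde c_0,A_1,w$ and set $\tilde c_j=\tilde c_0-jA_1$ for all integers $j$. Sequences $s=(s_0,s_1,\dots)$ are integer sequences with finitely many nonzero terms; $(0)$ is the zero sequence; $|s|=\sum_i s_i$, $[s]=\sum_i s_i(i+1)$; $\sigma_0=(1,0,0,\dots)$, and for $i\ge1$, $\sigma_i$ has $-1$ at position $i-1$, $+1$ at position $i$, $0$ elsewhere. For $n\ge0$ and $s$ with non-negative entries, $B^n_s$ is defined by induction on $n+[s]$: $B^0_{(0)}=1$, and otherwise $B^n_s=(1-\delta_{s_0,0})(n+|s|-1)(\tilde c_{n+|s|-2}-w)\sum_{l=0}^{n-1}B^l_{s-\sigma_0}+\sum_{i\ge1}(1-\delta_{s_i,0})(s_{i-1}+1)\sum_{l=0}^{n-1}B^l_{s-\sigma_i}$ (empty sums vanish). For an integer $n$, $\{n\}=n(\tilde c_{n-1}-w)$; for a sequence $s$ and integers $l,a$, $\{s,l,a\}=\{l+|s|\}$ if $a=0$ and $\{s,l,a\}=s_{a-1}$ if $a\neq0$. $\mathcal A$ is the set of finite sequences $J=(j_1,\dots,j_\alpha)$ of non-negative integers with $j_1=0$, $|J|=\alpha$; $s^J_a=\sum_{a'=1}^a\sigma_{j_{a'}}$ ($s^J_0=(0)$), $s^J=s^J_{|J|}$. $\mathcal A^0\subset\mathcal A$ consists of those $J$ for which all entries of all $s^J_a$, $1\le a\le|J|$, are non-negative; $\mathcal A^0_s=\{J\in\mathcal A^0:s^J=s\}$ (such $J$ have $|J|=[s]$). *)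

From HB Require Import structures.
From mathcomp Require Import all_boot all_order all_algebra.
From mathcomp Require Import boolp classical_sets fsbigop reals.
Set Implicit Arguments. Unset Strict Implicit. Unset Printing Implicit Defensive.
Import Order.TTheory GRing.Theory Num.Theory.
Local Open Scope classical_set_scope.
Local Open Scope ring_scope.

(* Integer sequences with finitely many nonzero terms are represented by
   finite lists [seq int] (resp. [seq nat] when entries are non-negative),
   with implicit trailing zeros: the i-th term is [nth 0 s i]. *)

Definition sadd (s t : seq int) : seq int :=
  mkseq (fun k => nth 0 s k + nth 0 t k) (maxn (size s) (size t)).

Definition sigma (i : nat) : seq int :=
  if i is i'.+1 then rcons (nseq i' 0) (-1) ++ [:: 1] else [:: 1].

Definition abs_s (s : seq int) : int := \sum_(x <- s) x.

Definition weight (s : seq nat) : nat := (\sum_(i < size s) nth 0 s i * i.+1)%N.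

(* s^J_a = sum_{a'=1}^a sigma_{j_a'}, where J = [:: j_1; ...; j_alpha] *)
Definition sJ (J : seq nat) (a : nat) : seq int :=
  foldr sadd [::] (map sigma (take a J)).

Definition inA (J : seq nat) : Prop := (0 < size J)%N /\ nth 0 J 0 = 0%N.

Definition inA0 (J : seq nat) : Prop :=
  inA J /\ forall a, (1 <= a <= size J)%N -> forall k, 0 <= nth 0 (sJ J a) k.

Definition A0s (s : seq nat) : set (seq nat) :=
  [set J | inA0 J /\ forall k, nth 0 (sJ J (size J)) k = (nth 0%N s k)%:Z].

Section Coefs.
Variables (R : realType) (c0 A1 w : R).

Definition ct (j : int) : R := c0 - j%:~R * A1.

Definition brace1 (n : int) : R := n%:~R * (ct (n - 1) - w).

Definition brace3 (s : seq int) (l : int) (a : nat) : R :=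
  if a == 0%N then brace1 (l + abs_s s) else (nth 0 s a.-1)%:~R.

Definition sub_sigma0 (s : seq nat) : seq nat := set_nth 0%N s 0 (nth 0%N s 0 - 1)%N.
Definition sub_sigma (s : seq nat) (i : nat) : seq nat :=
  set_nth 0%N (set_nth 0%N s i (nth 0%N s i - 1)%N) i.-1 (nth 0%N s i.-1 + 1)%N.

(* B^n_s, by recursion with fuel k; each recursive call lowers [s] by 1,
   so fuel [s] suffices (see B below). *)
Fixpoint Bf (k n : nat) (s : seq nat) : R :=
  if (n == 0%N) && all (fun x => x == 0%N) s then 1 else
  match k with
  | 0%N => 0
  | k'.+1 =>
      (nth 0%N s 0 != 0%N)%:R * ((n + sumn s)%:Z - 1)%:~R
        * (ct ((n + sumn s)%:Z - 2) - w)
        * \sum_(l < n) Bf k' l (sub_sigma0 s)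
      + \sum_(1 <= i < size s)
          (nth 0%N s i != 0%N)%:R * (nth 0%N s i.-1 + 1)%:R
            * \sum_(l < n) Bf k' l (sub_sigma s i)
  end.

Definition B (n : nat) (s : seq nat) : R := Bf (weight s) n s.

End Coefs.

Definition Lset (alpha n : nat) : set (seq nat) :=
  [set L | size L = alpha /\ sorted ltn L /\ (1 <= nth 0%N L 0)%N
           /\ nth 0%N L alpha.-1 = n].

(* Unfolding the recursion for B^n_s once splits it along a last step sigma_i
   with s_i > 0: the coefficient is exactly {s - sigma_i, n, i}, times
   sum_{l < n} B^l_{s - sigma_i}.  Iterating down to s = (0), which takes [s]
   steps because each step lowers [s] by one, the branches are the J in A^0_s
   read backwards, and each branch contributes a nested sum over
   l_1 < l_2 < ... < l_alpha = n of the product of the braces along J. *)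

From HB Require Import structures.
From mathcomp Require Import all_boot all_order all_algebra.
From mathcomp Require Import boolp classical_sets fsbigop reals.
From mathcomp Require Import zify.
Import Order.TTheory GRing.Theory Num.Theory.
Local Open Scope classical_set_scope.
Local Open Scope ring_scope.
Set Implicit Arguments. Unset Strict Implicit. Unset Printing Implicit Defensive.

Definition sigma_sum (J : seq nat) : seq int := foldr sadd [::] (map sigma J).

(* [sub_sigma s 0] is not s - sigma_0: it overwrites entry 0 twice. *)
Definition minus_sigma (s : seq nat) (i : nat) : seq nat :=
  if i is 0%N then sub_sigma0 s else sub_sigma s i.

Definition zero_seq (s : seq nat) : bool := all (fun x => x == 0%N) s.

Lemma zero_seqP s : reflect (forall k, nth 0%N s k = 0%N) (zero_seq s).
Proof.
apply: (iffP (all_nthP 0%N)) => [s0 k | s0 k _]; last exact/eqP.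
by case: (ltnP k (size s)) => [/s0/eqP | /(nth_default 0%N)].
Qed.

Lemma nth_neq0_size s i : nth 0%N s i != 0%N -> (i < size s)%N.
Proof. by apply: contraR; rewrite -leqNgt => /(nth_default 0%N) ->. Qed.

Lemma nth_Posz s k : nth 0 (map Posz s) k = (nth 0%N s k)%:Z.
Proof.
case: (ltnP k (size s)) => [ks | sk]; first by rewrite (nth_map 0%N).
by rewrite !nth_default ?size_map.
Qed.

Lemma nth_sadd s t k : nth 0 (sadd s t) k = nth 0 s k + nth 0 t k.
Proof.
rewrite /sadd; case: (ltnP k (maxn (size s) (size t))) => [k_lt | ].
  by rewrite nth_mkseq.
rewrite geq_max => /andP[sk tk].
by rewrite !nth_default ?size_mkseq ?geq_max ?sk ?tk.
Qed.

Lemma nth_sigma0 k : nth 0 (sigma 0) k = (k == 0%N)%:R.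
Proof. by case: k => [|k] //=; rewrite nth_nil. Qed.

Lemma nth_sigmaS i k : nth 0 (sigma i.+1) k = (k == i.+1)%:R - (k == i)%:R.
Proof.
elim: i k => [|i IH] [|k] //=.
by case: k => [|k] //=; rewrite nth_nil subr0.
Qed.

Lemma nth_sigma_diag i : nth 0 (sigma i) i = 1.
Proof.
by case: i => [|i]; rewrite ?nth_sigma0 ?nth_sigmaS eqxx ?(gtn_eqF (ltnSn i)) ?subr0.
Qed.

Lemma nth_sigma_sum_rcons J i k :
  nth 0 (sigma_sum (rcons J i)) k = nth 0 (sigma_sum J) k + nth 0 (sigma i) k.
Proof.
elim: J => [|j J IH] /=; first by rewrite nth_sadd nth_nil addr0 add0r.
by rewrite !nth_sadd IH addrA.
Qed.

Lemma nth_minus_sigma s i k : nth 0%N s i != 0%N ->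
  (nth 0%N (minus_sigma s i) k)%:Z = (nth 0%N s k)%:Z - nth 0 (sigma i) k.
Proof.
case: i => [|i] si; rewrite /minus_sigma.
  rewrite nth_sigma0 nth_set_nth /=; case: (eqVneq k 0%N) => [-> | _].
    by move: si; case: (nth 0%N s 0) => // m _; rewrite subn1 /=; lia.
  by rewrite subr0.
rewrite nth_sigmaS nth_set_nth /= nth_set_nth /=.
case: (eqVneq k i) => [-> | _]; first by rewrite (ltn_eqF (ltnSn i)) sub0r opprK.
case: (eqVneq k i.+1) => [-> | _]; last by rewrite !subr0.
by move: si; case: (nth 0%N s i.+1) => // m _; rewrite subn1 /= subr0; lia.
Qed.

Lemma sum_nth_widen (V : nmodType) (T : Type) (x0 : T) (t : seq T)
    (f : nat -> T -> V) N :
  (size t <= N)%N -> (forall k, f k x0 = 0) ->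
  \sum_(k < size t) f k (nth x0 t k) = \sum_(k < N) f k (nth x0 t k).
Proof.
move=> tN f0; rewrite (big_ord_widen _ (fun k => f k (nth x0 t k)) tN) big_mkcond.
by apply: eq_bigr => k _; case: ltnP => // /(nth_default x0) ->.
Qed.

Lemma sum_indicator (V : pzSemiRingType) N i (F : nat -> V) :
  \sum_(k < N) (k == i :> nat)%:R * F k = if (i < N)%N then F i else 0.
Proof.
rewrite -(@big_ord1_eq _ 0 +%R F) [RHS]big_mkcond; apply: eq_bigr => k _.
by case: eqP; rewrite ?mul1r ?mul0r.
Qed.

Lemma sum_sigma_weight N i : (i < N)%N ->
  \sum_(k < N) nth 0 (sigma i) k * k.+1%:R = 1.
Proof.
case: i => [|i] iN.
  under eq_bigr do rewrite nth_sigma0.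
  by rewrite (sum_indicator _ _ (fun k => k.+1%:R)) iN.
under eq_bigr => k _ do rewrite nth_sigmaS mulrBl.
rewrite sumrB !(sum_indicator _ _ (fun k => k.+1%:R)) iN (ltnW iN); lia.
Qed.

Lemma weight_sum s N : (size s <= N)%N ->
  (weight s)%:Z = \sum_(k < N) (nth 0%N s k)%:Z * k.+1%:R.
Proof.
move=> sN; rewrite /weight -natz natr_sum.
rewrite (@sum_nth_widen _ _ 0%N s (fun k x => (x * k.+1)%:R : int) N sN) //.
by apply: eq_bigr => k _; rewrite natrM natz.
Qed.

Lemma weight_eq0 s : (weight s == 0%N) = zero_seq s.
Proof.
rewrite /weight sum_nat_eq0; apply/forallP/zero_seqP => [s0 k | s0 k].
  case: (ltnP k (size s)) => [ks | /(nth_default 0%N) //].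
  by have /= := s0 (Ordinal ks); rewrite muln_eq0 orbF => /eqP.
by rewrite s0.
Qed.

Lemma weight_minus_sigma s i : nth 0%N s i != 0%N ->
  weight s = (weight (minus_sigma s i)).+1.
Proof.
move=> si; set N := maxn (size s) (size (minus_sigma s i)).
have iN : (i < N)%N by rewrite (leq_trans (nth_neq0_size si)) ?leq_maxl.
apply/eqP; rewrite -eqz_nat -addn1 PoszD !(@weight_sum _ N) ?leq_maxl ?leq_maxr //.
rewrite -[X in _ == _ + X](sum_sigma_weight iN) -big_split /=.
apply/eqP/eq_bigr => k _.
by rewrite nth_minus_sigma // mulrBl subrK.
Qed.

Lemma abs_s_nth t N : (size t <= N)%N -> abs_s t = \sum_(k < N) nth 0 t k.
Proof.
move=> tN; rewrite /abs_s (big_nth 0) big_mkord.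
exact: (@sum_nth_widen _ _ 0 t (fun _ x => x) N tN).
Qed.

Lemma eq_abs_s t t' : nth 0 t =1 nth 0 t' -> abs_s t = abs_s t'.
Proof.
move=> tt'; set N := maxn (size t) (size t').
rewrite !(@abs_s_nth _ N) ?leq_maxl ?leq_maxr //.
exact: eq_bigr.
Qed.

Lemma abs_s_map_Posz t : abs_s (map Posz t) = (sumn t)%:Z.
Proof. by rewrite /abs_s big_map sumnE (big_morph Posz PoszD (erefl 0%:Z)). Qed.

Definition admissible (J : seq nat) : Prop := forall a k, 0 <= nth 0 (sJ J a) k.

Lemma sJ_rcons J i a : (a <= size J)%N -> sJ (rcons J i) a = sJ J a.
Proof. by move=> aJ; rewrite /sJ -cats1 takel_cat. Qed.

Lemma sJ_oversize J a : (size J <= a)%N -> sJ J a = sigma_sum J.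
Proof. by move=> Ja; rewrite /sJ take_oversize. Qed.

Lemma admissible_rcons J i : admissible (rcons J i) <->
  admissible J /\ forall k, 0 <= nth 0 (sigma_sum (rcons J i)) k.
Proof.
split=> [adm | [adm nonneg] a k].
  split=> [a k | k]; last by rewrite -(@sJ_oversize _ (size (rcons J i))).
  case: (leqP a (size J)) => [aJ | /ltnW Ja]; first by rewrite -(sJ_rcons i aJ).
  by rewrite (sJ_oversize Ja) -(sJ_oversize (leqnn _)) -(sJ_rcons i (leqnn _)).
case: (leqP a (size J)) => [aJ | Ja]; first by rewrite sJ_rcons.
by rewrite sJ_oversize ?size_rcons.
Qed.

Lemma admissible_head J : admissible J -> nth 0%N J 0 = 0%N.
Proof.
case: J => [|[|j] J] // adm; have := adm 1%N j.
have -> : sJ (j.+1 :: J) 1 = sigma_sum (rcons [::] j.+1) by rewrite /sJ /= take0.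
by rewrite nth_sigma_sum_rcons nth_sigmaS eqxx (ltn_eqF (ltnSn j)) nth_nil.
Qed.

Fixpoint A0s_enum (k : nat) (s : seq nat) : seq (seq nat) :=
  if zero_seq s then [:: [::]] else
  if k is k'.+1 then
    [seq rcons J i | i <- [seq i <- iota 0 (size s) | nth 0%N s i != 0%N],
                     J <- A0s_enum k' (minus_sigma s i)]
  else [::].

Lemma mem_A0s_enum_nil k s : ([::] \in A0s_enum k s) = zero_seq s.
Proof.
case: k => [|k] /=; case: ifP => //= _.
by apply/negbTE/allpairsPdep => -[i [J [_ _]]]; case: J.
Qed.

Lemma mem_A0s_enum_rcons s J i :
  (rcons J i \in A0s_enum (weight s) s) =
  (nth 0%N s i != 0%N)
  && (J \in A0s_enum (weight (minus_sigma s i)) (minus_sigma s i)).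
Proof.
case: (boolP (zero_seq s)) => [zs | nzs].
  have -> : A0s_enum (weight s) s = [:: [::]].
    by case: (weight s) => [|k] /=; rewrite zs.
  by move/zero_seqP: zs => ->; rewrite inE; case: J.
have [k wk] : exists k, weight s = k.+1.
  by exists (weight s).-1; rewrite prednK // lt0n weight_eq0.
have ws' j : nth 0%N s j != 0%N -> weight (minus_sigma s j) = k.
  by move=> sj; apply: succn_inj; rewrite -weight_minus_sigma.
rewrite wk /= (negbTE nzs); apply/allpairsPdep/andP.
  move=> [j [J' [+ + /rcons_inj [-> ->]]]]; rewrite mem_filter => /andP[sj _].
  by rewrite ws'.
move=> [si Js]; exists i, J; split=> //; last by rewrite -(ws' i si).
by rewrite mem_filter si mem_iota nth_neq0_size.
Qed.

Lemma mem_A0s_enum s J : J \in A0s_enum (weight s) s <->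
  admissible J /\ nth 0 (sigma_sum J) =1 nth 0 (map Posz s).
Proof.
elim/last_ind: J s => [|J i IH] s.
  rewrite mem_A0s_enum_nil; split => [/zero_seqP s0 | [_ s0]].
    by split => [a k | k]; rewrite ?nth_Posz ?s0 nth_nil.
  by apply/zero_seqP => k; have := s0 k; rewrite nth_Posz nth_nil => -[].
rewrite mem_A0s_enum_rcons; split.
  case/andP => si /IH [adm ss].
  have ss' : nth 0 (sigma_sum (rcons J i)) =1 nth 0 (map Posz s).
    by move=> k; rewrite nth_sigma_sum_rcons ss !nth_Posz nth_minus_sigma // subrK.
  by split => //; apply/admissible_rcons; split => // k; rewrite ss' nth_Posz.
move=> [/admissible_rcons [adm _] ss].
have si : nth 0%N s i != 0%N.
  have := adm (size J) i; rewrite sJ_oversize //.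
  move: (ss i); rewrite nth_sigma_sum_rcons nth_sigma_diag nth_Posz; lia.
rewrite si /=; apply/IH; split => // k.
by rewrite nth_Posz nth_minus_sigma // -nth_Posz -ss nth_sigma_sum_rcons addrK.
Qed.

Lemma size_A0s_enum s J : J \in A0s_enum (weight s) s -> size J = weight s.
Proof.
elim/last_ind: J s => [|J i IH] s.
  by rewrite mem_A0s_enum_nil => zs; apply/esym/eqP; rewrite weight_eq0.
rewrite mem_A0s_enum_rcons size_rcons => /andP[si /IH ->].
by rewrite -weight_minus_sigma.
Qed.

Lemma A0s_enum_uniq k s : uniq (A0s_enum k s).
Proof.
elim: k s => [|k IH] s /=; case: ifP => // _.
apply: allpairs_uniq_dep => [||[i J] [i' J'] _ _ /= /rcons_inj [-> ->]] //.
by rewrite filter_uniq ?iota_uniq.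
Qed.

Lemma A0sE s : ~~ zero_seq s -> A0s s = [set` A0s_enum (weight s) s].
Proof.
move=> nzs; apply/seteqP; split => J /=.
  move=> [[[J_gt0 _] nonneg] ss]; apply/mem_A0s_enum; split=> [a k | k].
    case: (posnP a) => [-> | a_gt0]; first by rewrite /sJ take0 /= nth_nil.
    case: (leqP a (size J)) => [aJ | /ltnW Ja].
      by apply: nonneg; rewrite a_gt0.
    rewrite (sJ_oversize Ja) -(sJ_oversize (leqnn _)).
    by apply: nonneg; rewrite J_gt0 leqnn.
  by rewrite nth_Posz -ss /sJ take_size.
move=> JA; have [adm ss] := (mem_A0s_enum s J).1 JA.
have J_gt0 : (0 < size J)%N by rewrite (size_A0s_enum JA) lt0n weight_eq0.
split; last by move=> k; rewrite /sJ take_size ss nth_Posz.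
by split=> [|a _ k]; [split; last exact: admissible_head | exact: adm].
Qed.

Fixpoint chains (a n : nat) : seq (seq nat) :=
  if a is a'.+1 then [seq rcons L n | l <- iota 0 n, L <- chains a' l]
  else if n == 0%N then [:: [::]] else [::].

Lemma mem_chains a n L :
  (L \in chains a n) = [&& size L == a, path ltn 0%N L & last 0%N L == n].
Proof.
elim: a n L => [|a IH] n L /=; first by case: L => [|x L]; case: n.
apply/allpairsPdep/idP => [[l [L' [ln + ->]]] | ].
  rewrite IH size_rcons rcons_path last_rcons eqSS => /and3P[-> -> /eqP ->].
  by rewrite eqxx -(mem_iota 0 n) ln.
case/lastP: L => [|L m] //; rewrite size_rcons rcons_path last_rcons eqSS.
move=> /and3P[La /andP[LP Lm] /eqP <-]; exists (last 0%N L), L.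
split=> //; first by rewrite mem_iota add0n; exact: Lm.
by rewrite IH La LP eqxx.
Qed.

Lemma chains_uniq a n : uniq (chains a n).
Proof.
elim: a n => [|a IH] n /=; first by case: ifP.
apply: allpairs_uniq_dep => [|l _|]; rewrite ?iota_uniq //.
move=> _ _ /allpairsPdep[l [L [_ Ll ->]]] /allpairsPdep[l' [L' [_ Ll' ->]]].
move=> E; have eL : L = L' by apply: (@rcons_injl _ n); exact: E.
by move: Ll Ll'; rewrite !mem_chains eL => /and3P[_ _ /eqP <-] /and3P[_ _ /eqP <-].
Qed.

Lemma LsetE a n : (0 < a)%N -> Lset a n = [set` chains a n].
Proof.
move=> a_gt0; apply/seteqP; split => -[|x L] /=; rewrite mem_chains //=.
- by move=> [La _]; rewrite -La in a_gt0.
- move=> [<- [/= LP [/= x_gt0 <-]]].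
  by rewrite (nth_last 0%N (x :: L)) eqxx x_gt0 /= eqxx andbT.
- by case/andP => /eqP a0; rewrite -a0 in a_gt0.
- case/and3P => /eqP <- /andP[x_gt0 LP] /eqP <-.
  by do 3 split => //; rewrite (nth_last 0%N (x :: L)).
Qed.

Section Expansion.
Variables (R : realType) (c0 A1 w : R).

Lemma eq_brace3 t t' l a : nth 0 t =1 nth 0 t' ->
  brace3 c0 A1 w t l a = brace3 c0 A1 w t' l a.
Proof. by move=> tt'; rewrite /brace3 (eq_abs_s tt') tt'. Qed.

Definition chain_term (J L : seq nat) : R :=
  \prod_(0 <= a < size J) brace3 c0 A1 w (sJ J a) (nth 0%N L a)%:Z (nth 0%N J a).

Lemma chain_term_rcons J i L m : size L = size J ->
  chain_term (rcons J i) (rcons L m)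
  = chain_term J L * brace3 c0 A1 w (sigma_sum J) m%:Z i.
Proof.
move=> LJ; rewrite /chain_term size_rcons big_nat_recr //=.
rewrite sJ_rcons // sJ_oversize //.
rewrite !nth_rcons LJ ltnn eqxx; congr (_ * _); apply: eq_big_nat => a /andP[_ aJ].
by rewrite sJ_rcons ?(ltnW aJ) // !nth_rcons LJ aJ.
Qed.

(* {l_1} is the factor {s^J_0, l_1, j_1}, as j_1 = 0 and s^J_0 = (0). *)
Lemma chain_term_first J L : (0 < size J)%N -> nth 0%N J 0 = 0%N ->
  brace1 c0 A1 w (nth 0%N L 0)%:Z
    * \prod_(2 <= a < (size J).+1)
        brace3 c0 A1 w (sJ J a.-1) (nth 0%N L a.-1)%:Z (nth 0%N J a.-1)
  = chain_term J L.
Proof.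
move=> J_gt0 J0; rewrite /chain_term [RHS]big_ltn // big_add1 /= J0.
by rewrite /brace3 /= /sJ take0 /abs_s big_nil addr0.
Qed.

Definition nested_sum (J : seq nat) (n : nat) : R :=
  \sum_(L <- chains (size J) n) chain_term J L.

Lemma nested_sum_nil n : nested_sum [::] n = (n == 0%N)%:R.
Proof.
rewrite /nested_sum; case: n => [|n]; rewrite /= ?big_seq1 ?big_nil //.
by rewrite /chain_term big_geq.
Qed.

Lemma nested_sum_rcons J i n :
  nested_sum (rcons J i) n
  = brace3 c0 A1 w (sigma_sum J) n%:Z i * \sum_(l < n) nested_sum J l.
Proof.
rewrite /nested_sum size_rcons /= big_allpairs_dep mulr_sumr.
have -> : iota 0 n = index_iota 0 n by rewrite /index_iota subn0.
rewrite big_mkord.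
apply: eq_bigr => l _; rewrite mulr_sumr; apply: eq_big_seq => L.
by rewrite mem_chains => /and3P[/eqP LJ _ _]; rewrite chain_term_rcons // mulrC.
Qed.

Lemma Bf_step k n s : ~~ zero_seq s ->
  Bf c0 A1 w k.+1 n s = \sum_(0 <= i < size s)
    (nth 0%N s i != 0%N)%:R * brace3 c0 A1 w (map Posz (minus_sigma s i)) n%:Z i
      * \sum_(l < n) Bf c0 A1 w k l (minus_sigma s i).
Proof.
move=> nzs; have s_gt0 : (0 < size s)%N by case: s nzs.
have nzs' : all (fun x => x == 0%N) s = false := negbTE nzs.
rewrite /= nzs' andbF [RHS]big_ltn //; congr (_ + _).
  case: s s_gt0 {nzs nzs'} => // x s _; case: (eqVneq x 0%N) => [-> | x_neq0].
    by rewrite !mul0r.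
  rewrite /brace3 /brace1 eqxx; set m := (n + sumn (x :: s))%:Z.
  have -> : n%:Z + abs_s (map Posz (minus_sigma (x :: s) 0)) = m - 1.
    by rewrite abs_s_map_Posz /m /=; lia.
  by rewrite (_ : m - 1 - 1 = m - 2) ?mulrA //; lia.
apply: eq_big_nat => -[|i] // _.
by rewrite /brace3 /= nth_Posz nth_set_nth /= eqxx -pmulrn.
Qed.

Lemma Bf_sum_nested k s n : weight s = k ->
  Bf c0 A1 w k n s = \sum_(J <- A0s_enum k s) nested_sum J n.
Proof.
elim: k s n => [|k IH] s n ws.
  have zs : zero_seq s by rewrite -weight_eq0 ws.
  have zs' : all (fun x => x == 0%N) s := zs.
  by rewrite /= zs zs' andbT big_seq1 nested_sum_nil; case: n.
have nzs : ~~ zero_seq s by rewrite -weight_eq0 ws.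
rewrite Bf_step // /= (negbTE nzs) big_allpairs_dep big_filter big_mkcond /=.
rewrite /index_iota subn0; apply: eq_bigr => i _.
case: (eqVneq (nth 0%N s i) 0%N) => [_ | si].
  by rewrite !mul0r.
have ws' : weight (minus_sigma s i) = k.
  by apply: succn_inj; rewrite -weight_minus_sigma.
under eq_bigr do rewrite (IH _ _ ws').
rewrite mul1r exchange_big mulr_sumr; apply: eq_big_seq => J.
rewrite -{1}ws' => /mem_A0s_enum[_ ss].
by rewrite nested_sum_rcons (eq_brace3 _ _ ss).
Qed.

End Expansion.

Theorem mainTheorem7 (R : realType) (c0 A1 w : R) (n : nat) (s : seq nat) :
  has (fun x => x != 0%N) s ->
  B c0 A1 w n s =
  \sum_(J \in A0s s) \sum_(L \in Lset (weight s) n)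
     (brace1 c0 A1 w (nth 0%N L 0)%:Z
      * \prod_(2 <= a < (weight s).+1)
          brace3 c0 A1 w (sJ J a.-1) (nth 0%N L a.-1)%:Z (nth 0%N J a.-1)).
Proof.
move=> s_neq0; have nzs : ~~ zero_seq s by rewrite /zero_seq -has_predC.
have ws_gt0 : (0 < weight s)%N by rewrite lt0n weight_eq0.
rewrite /B (Bf_sum_nested c0 A1 w n (erefl (weight s))) (A0sE nzs).
rewrite -fsbig_seq ?A0s_enum_uniq //.
apply: eq_big_seq => J JA; have [[[J_gt0 J0] _] _] : A0s s J by rewrite A0sE.
rewrite /nested_sum (size_A0s_enum JA) (LsetE _ ws_gt0) -fsbig_seq ?chains_uniq //.
by apply: eq_bigr => L _; rewrite -(size_A0s_enum JA) chain_term_first.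
Qed.
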